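(* Let $\mathcal S_1\subsetneq\mathbb N$ be a numerical semigroup generated by $a_1<\dots<a_n$, where $a_1=\min(\mathcal S_1\setminus\{0\})$, and set $a=\min\{b\in\mathcal S_1: a_1\nmid b\}$. If $y\in\mathbb N$ satisfies $y+i\notin\mathcal S_1$ for every $i\in\{0,\dots,a-1\}$ with $a_1\nmid i$, then $y=0$.
   Context: A numerical semigroup is a submonoid of $\mathbb N$ with finite complement. Since $\mathcal S_1\ne\mathbb N$, $a_1\ge2$ and the element $a$ exists. *)

From mathcomp Require Import all_boot.
Set Implicit Arguments. Unset Strict Implicit. Unset Printing Implicit Defensive.

Definition numerical_semigroup (S : nat -> bool) : Prop :=
  [/\ S 0,
      (forall x y, S x -> S y -> S (x + y)) &
      exists N, forall m, N <= m -> S m].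

Definition generated_by (S : nat -> bool) (gs : seq nat) : Prop :=
  forall m, S m <->
    exists c : seq nat, size c = size gs /\
      m = \sum_(i < size gs) nth 0 c i * nth 0 gs i.

From mathcomp Require Import all_boot.
From mathcomp Require Import zify.

(* Let y > 0.  If a1 divides y, then y + (a - a1) = a + (y - a1) lies in S;
   otherwise y + (a1 - y %% a1) is a multiple of a1, hence in S.  Both shifts
   are below a and not divisible by a1, contradicting the hypothesis on y. *)

Section AddClosed.

Variable S : nat -> bool.
Hypothesis S0 : S 0.
Hypothesis SD : forall x y, S x -> S y -> S (x + y).

Lemma add_closed_addn_dvd {d m n} : S d -> S m -> d %| n -> S (m + n).
Proof.
move=> Sd Sm /dvdnP [k ->]; elim: k => [|k IHk]; first by rewrite addn0.
by rewrite mulSn addnCA; apply: SD.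
Qed.

Lemma add_closed_shift_nondvd {a1 a y} :
  0 < a1 -> a1 <= a -> S a1 -> S a -> ~~ (a1 %| a) -> 0 < y ->
  exists2 i, i < a & ~~ (a1 %| i) && S (y + i).
Proof.
move=> a1_gt0 le_a1a Sa1 Sa a1Na y_gt0.
have [a1y | a1Ny] := boolP (a1 %| y).
- exists (a - a1); first lia.
  have le_a1y : a1 <= y by apply: dvdn_leq.
  rewrite dvdn_subl // a1Na /=.
  have -> : y + (a - a1) = a + (y - a1) by lia.
  by apply: (add_closed_addn_dvd Sa1 Sa); rewrite dvdn_subl.
- have mod_gt0 : 0 < y %% a1 by rewrite lt0n.
  have mod_lt : y %% a1 < a1 by rewrite ltn_mod.
  exists (a1 - y %% a1); first lia.
  rewrite gtnNdvd /=; [|lia|lia].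
  have -> : y + (a1 - y %% a1) = 0 + (y %/ a1).+1 * a1.
    by rewrite add0n {1}(divn_eq y a1) mulSn; lia.
  by apply: (add_closed_addn_dvd Sa1 S0); apply: dvdn_mull.
Qed.

End AddClosed.

Theorem mainTheorem14 (S : nat -> bool) (gs : seq nat) (a1 a : nat) :
  numerical_semigroup S ->
  (exists m, ~~ S m) ->
  generated_by S gs ->
  sorted ltn gs ->
  a1 = head 0 gs ->
  (S a1 /\ 0 < a1 /\ forall b, S b -> 0 < b -> a1 <= b) ->
  (S a /\ ~~ (a1 %| a) /\ forall b, S b -> ~~ (a1 %| b) -> a <= b) ->
  forall y : nat,
    (forall i, i < a -> ~~ (a1 %| i) -> ~~ S (y + i)) ->
    y = 0.
Proof.
move=> [S0 SD _] _ _ _ _ [Sa1 [a1_gt0 a1_min]] [Sa [a1Na _]] y gap.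
have a_gt0 : 0 < a by rewrite lt0n; apply: contraNneq a1Na => ->.
have [// | y_gt0] := posnP y.
have [i lt_ia /andP [a1Ni Syi]] :=
  add_closed_shift_nondvd S S0 SD a1_gt0 (a1_min a Sa a_gt0) Sa1 Sa a1Na y_gt0.
by move: (gap i lt_ia a1Ni); rewrite Syi.
Qed.
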